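(* Let $A$ be a bounded linear operator on a complex Hilbert space $\mathcal{H}$. For $t \in [0,2\pi)$ put $A_t = e^{it}A$, $H_t = \frac{1}{2}(A_t + A_t^* )$, $J_t = \frac{1}{2i}(A_t - A_t^* )$, and \[ b_x(t) = \sup_{\|x\|=1}\langle H_t x, x\rangle - \inf_{\|x\|=1}\langle H_t x, x\rangle,\qquad b_y(t) = \sup_{\|x\|=1}\langle J_t x, x\rangle - \inf_{\|x\|=1}\langle J_t x, x\rangle . \] Then \[ \|A^*A - AA^*\| \le \min_{t \in [0,2\pi)} \{ b_x(t)\, b_y(t) \}. \]
   Context: $b_x(t)$ and $b_y(t)$ are the widths of the numerical range $W(e^{it}A)=\{\langle e^{it}Ax,x\rangle : \|x\|=1\}$ in the directions of the real and imaginary axes respectively. *)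

From HB Require Import structures.
From mathcomp Require Import all_boot all_order all_algebra.
From mathcomp Require Import classical_sets boolp reals trigo.
From mathcomp Require Import complex.
Set Implicit Arguments. Unset Strict Implicit. Unset Printing Implicit Defensive.
Import Order.TTheory GRing.Theory Num.Theory.
Local Open Scope ring_scope.
Local Open Scope classical_set_scope.

Section Hilbert.
Variables (R : realType) (V : lmodType R[i]) (ip : V -> V -> R[i]).

Definition hnorm (x : V) : R := Num.sqrt (complex.Re (ip x x)).

Record is_hilbert : Prop := IsHilbert {
  ip_linl : forall (a : R[i]) (x y z : V), ip (a *: x + y) z = a * ip x z + ip y z;
  ip_conj : forall x y : V, ip y x = (ip x y)^*;
  ip_ge0  : forall x : V, 0 <= ip x x;
  ip_def  : forall x : V, ip x x = 0 -> x = 0;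
  ip_complete : forall u : nat -> V,
    (forall e : R, 0 < e -> exists N : nat, forall m n : nat,
        (N <= m)%N -> (N <= n)%N -> hnorm (u m - u n) < e) ->
    exists l : V, forall e : R, 0 < e -> exists N : nat, forall n : nat,
        (N <= n)%N -> hnorm (u n - l) < e }.

Definition is_bounded_linear (A : V -> V) : Prop :=
  (forall (a : R[i]) (x y : V), A (a *: x + y) = a *: A x + A y) /\
  (exists M : R, forall x : V, hnorm (A x) <= M * hnorm x).

Definition is_adjoint (A As : V -> V) : Prop :=
  forall x y : V, ip (A x) y = ip x (As y).

Definition unit_sphere : set V := [set x | hnorm x = 1].

Definition opnorm (T : V -> V) : R := sup [set hnorm (T x) | x in unit_sphere].

Definition eit (t : R) : R[i] := Complex (cos t) (sin t).
Definition imag_unit : R[i] := Complex 0 1.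

Definition At (A : V -> V) (t : R) (x : V) : V := eit t *: A x.
Definition Ats (As : V -> V) (t : R) (x : V) : V := (eit t)^* *: As x.
Definition Ht (A As : V -> V) (t : R) (x : V) : V :=
  (2%:R)^-1 *: (At A t x + Ats As t x).
Definition Jt (A As : V -> V) (t : R) (x : V) : V :=
  (2%:R * imag_unit)^-1 *: (At A t x - Ats As t x).

(* width of {<T x, x> : ||x|| = 1} for a self-adjoint T (values are real) *)
Definition width (T : V -> V) : R :=
  sup [set complex.Re (ip (T x) x) | x in unit_sphere]
  - inf [set complex.Re (ip (T x) x) | x in unit_sphere].

Definition b_x (A As : V -> V) (t : R) : R := width (Ht A As t).
Definition b_y (A As : V -> V) (t : R) : R := width (Jt A As t).

End Hilbert.

From HB Require Import structures.
From mathcomp Require Import all_boot all_order all_algebra.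
From mathcomp Require Import classical_sets boolp reals trigo.
From mathcomp Require Import complex.
From mathcomp Require Import ring lra.
Set Implicit Arguments. Unset Strict Implicit. Unset Printing Implicit Defensive.
Import Order.TTheory GRing.Theory Num.Theory.
Local Open Scope ring_scope.

(* Write B := e^{it} A = H + iJ with H = H_t and J = J_t self-adjoint. Then
   A^*A - AA^* = B^*B - BB^* = 2i (HJ - JH), and the commutator is unchanged when
   H and J are replaced by P := H - m_x and Q := J - m_y, m_x and m_y being the
   midpoints of their numerical ranges. The numerical range of the self-adjoint P
   lies in [-b_x/2, b_x/2], so by polarization ||P|| <= b_x/2; likewise
   ||Q|| <= b_y/2. Finally Re <(PQ - QP)x, y> = Re <Qx, Py> - Re <Px, Qy> is at
   most 2 ||P|| ||Q|| ||x|| ||y||, whence ||A^*A - AA^*|| <= 4 ||P|| ||Q|| <= b_x b_y. *)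

Section LinearMaps.
Variables (R : realType) (V : lmodType R[i]).
Implicit Types (u w : V) (c : R[i]).

Definition is_linear (f : V -> V) := forall c u w, f (c *: u + w) = c *: f u + f w.

Variable f : V -> V.
Hypothesis f_lin : is_linear f.

Lemma lin0 : f 0 = 0.
Proof. by have := f_lin 1 0 0; rewrite scaler0 addr0 scale1r -{1}[f 0]addr0 => /addrI. Qed.

Lemma linD u w : f (u + w) = f u + f w.
Proof. by have := f_lin 1 u w; rewrite !scale1r. Qed.

Lemma linZ c u : f (c *: u) = c *: f u.
Proof. by rewrite -[c *: u]addr0 f_lin lin0 addr0. Qed.

Lemma linN u : f (- u) = - f u.
Proof. by rewrite -scaleN1r linZ scaleN1r. Qed.

End LinearMaps.

Section ComplexFacts.
Variable R : realType.
Implicit Types (a : R[i]) (k : R).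

Lemma conjC_real k : ((k%:C)%C)^* = (k%:C)%C :> R[i].
Proof. exact: conjc_real. Qed.

Lemma Re_conjC a : complex.Re a^* = complex.Re a.
Proof. by case: a. Qed.

Lemma Re_realM k a : complex.Re ((k%:C)%C * a) = k * complex.Re a.
Proof. by case: a => x y /=; ring. Qed.

Lemma Re_mulNi a : complex.Re (- 'i * a) = complex.Im a.
Proof. by case: a => x y /=; ring. Qed.

Lemma eit_unit t : eit t * (eit t)^* = 1 :> R[i].
Proof.
apply/eqP; rewrite eq_complex /=; apply/andP; split; apply/eqP; last by ring.
by rewrite -(cos2Dsin2 t) !expr2; ring.
Qed.

End ComplexFacts.

Section InnerProduct.
Variables (R : realType) (V : lmodType R[i]) (ip : V -> V -> R[i]).
Hypothesis hH : is_hilbert ip.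
Implicit Types (x y z u v w : V) (c : R[i]).

Lemma ip0l z : ip 0 z = 0.
Proof. by have := ip_linl hH 1 0 0 z; rewrite scaler0 addr0 mul1r -{1}[ip 0 z]addr0 => /addrI. Qed.

Lemma ipDl x y z : ip (x + y) z = ip x z + ip y z.
Proof. by have := ip_linl hH 1 x y z; rewrite scale1r mul1r. Qed.

Lemma ipZl c x z : ip (c *: x) z = c * ip x z.
Proof. by have := ip_linl hH c x 0 z; rewrite !addr0 ip0l addr0. Qed.

Lemma ipNl x z : ip (- x) z = - ip x z.
Proof. by rewrite -scaleN1r ipZl mulN1r. Qed.

Lemma ipBl x y z : ip (x - y) z = ip x z - ip y z.
Proof. by rewrite ipDl ipNl. Qed.

Lemma ipDr x y z : ip z (x + y) = ip z x + ip z y.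
Proof. by rewrite (ip_conj hH) ipDl rmorphD /= -!(ip_conj hH). Qed.

Lemma ipZr c x z : ip z (c *: x) = c^* * ip z x.
Proof. by rewrite (ip_conj hH) ipZl rmorphM /= -(ip_conj hH). Qed.

Lemma ipNr x z : ip z (- x) = - ip z x.
Proof. by rewrite (ip_conj hH) ipNl rmorphN /= -(ip_conj hH). Qed.

Lemma ipBr x y z : ip z (x - y) = ip z x - ip z y.
Proof. by rewrite ipDr ipNr. Qed.

Lemma ipl_ext x y : (forall z, ip x z = ip y z) -> x = y.
Proof. by move=> e; apply/subr0_eq/(ip_def hH); rewrite ipBl e subrr. Qed.

Lemma Re_ipC u v : complex.Re (ip v u) = complex.Re (ip u v).
Proof. by rewrite (ip_conj hH) Re_conjC. Qed.

Definition sqnorm x := complex.Re (ip x x).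

Lemma ip_selfE x : ip x x = ((sqnorm x)%:C)%C.
Proof.
have := ip_ge0 hH x; rewrite lecE /sqnorm.
by case: (ip x x) => a b /= /andP[/eqP ->].
Qed.

Lemma sqnorm_ge0 x : 0 <= sqnorm x.
Proof. by have := ip_ge0 hH x; rewrite lecE => /andP[]. Qed.

Lemma sqnorm_eq0 x : sqnorm x = 0 -> x = 0.
Proof. by move=> e; apply: (ip_def hH); rewrite ip_selfE e. Qed.

Lemma sqnormZ c k x : c * c^* = (k%:C)%C -> sqnorm (c *: x) = k * sqnorm x.
Proof. by move=> e; rewrite /sqnorm ipZl ipZr mulrA e Re_realM. Qed.

Lemma hnorm_ge0 x : 0 <= hnorm ip x.
Proof. exact: sqrtr_ge0. Qed.

Lemma sqr_hnorm x : hnorm ip x ^+ 2 = sqnorm x.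
Proof. exact/sqr_sqrtr/sqnorm_ge0. Qed.

Lemma hnorm_eq1 x : (hnorm ip x = 1) = (sqnorm x = 1).
Proof.
apply/propext; split => [e|e]; first by rewrite -sqr_hnorm e expr1n.
by rewrite /hnorm -/(sqnorm x) e sqrtr1.
Qed.

Lemma hnormZ c k x : 0 <= k -> c * c^* = ((k ^+ 2)%:C)%C ->
  hnorm ip (c *: x) = k * hnorm ip x.
Proof.
move=> k0 e; rewrite /hnorm -!/(sqnorm _) (sqnormZ _ e).
by rewrite sqrtrM ?sqr_ge0 // sqrtr_sqr ger0_norm.
Qed.

Lemma sqr_Re_ip_le u v : complex.Re (ip u v) ^+ 2 <= sqnorm u * sqnorm v.
Proof.
(* nonnegativity of the real quadratic form [sqnorm (a u + b v)] in [(a, b)] *)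
have quad a b : 0 <= a ^+ 2 * sqnorm u + 2 * a * b * complex.Re (ip u v) + b ^+ 2 * sqnorm v.
  have := sqnorm_ge0 ((a%:C)%C *: u + (b%:C)%C *: v).
  rewrite /sqnorm !(ipDl, ipDr, ipZl, ipZr) !conjC_real !mulrDr !raddfD /= !Re_realM.
  by rewrite (Re_ipC u v) -/(sqnorm u) -/(sqnorm v); nra.
have [v0|vpos] := eqVneq (sqnorm v) 0.
  by rewrite v0 mulr0 (sqnorm_eq0 v0) (ip_conj hH) ip0l rmorph0 /= expr0n.
have vgt0 : 0 < sqnorm v by rewrite lt0r vpos sqnorm_ge0.
have := quad (sqnorm v) (- complex.Re (ip u v)).
set r := complex.Re _; set nu := sqnorm u; set nv := sqnorm v => h.
have : 0 <= nv * (nu * nv - r ^+ 2) by nra.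
by rewrite pmulr_rge0 // subr_ge0 mulrC.
Qed.

Lemma Re_ip_le u v : `|complex.Re (ip u v)| <= hnorm ip u * hnorm ip v.
Proof.
rewrite -ler_sqr ?nnegrE ?mulr_ge0 ?hnorm_ge0 // real_normK ?num_real //.
by rewrite exprMn !sqr_hnorm sqr_Re_ip_le.
Qed.

Lemma Im_ip_le u v : `|complex.Im (ip u v)| <= hnorm ip u * hnorm ip v.
Proof.
rewrite -Re_mulNi -ipZl; apply: le_trans (Re_ip_le _ _) _.
rewrite (@hnormZ (- 'i) 1) ?mul1r // expr1n.
by apply/eqP; rewrite eq_complex /=; apply/andP; split; apply/eqP; ring.
Qed.

Lemma hnorm_le_of_Re_ip w k : 0 <= k ->
  (forall y, complex.Re (ip w y) <= k * hnorm ip y) -> hnorm ip w <= k.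
Proof.
move=> k0 hw; have := hw w; rewrite -/(sqnorm w) -sqr_hnorm expr2.
have [->|wpos] := eqVneq (hnorm ip w) 0; first by [].
by rewrite ler_pM2r // lt0r wpos hnorm_ge0.
Qed.

Lemma hnorm_Z2i w : hnorm ip ((2 * 'i) *: w) = 2 * hnorm ip w.
Proof.
rewrite (@hnormZ _ 2) //.
apply/eqP; rewrite eq_complex /=; apply/andP; split; apply/eqP; ring.
Qed.

Lemma opnorm_le (T : V -> V) k : 0 <= k ->
  (forall x, hnorm ip (T x) <= k * hnorm ip x) -> opnorm ip T <= k.
Proof.
move=> k0 T_le; have [[x x1]|sphere0] := pselect (exists x, unit_sphere ip x).
  apply: ge_sup; first by exists (hnorm ip (T x)), x.
  by move=> _ [y y1 <-]; have := T_le y; rewrite y1 mulr1.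
rewrite /opnorm (_ : [set _ | _ in _]%classic = set0) ?sup0 //.
by apply/seteqP; split => // r [y y1 _]; apply: sphere0; exists y.
Qed.

Lemma adjoint_sym (B Bs : V -> V) : is_adjoint ip B Bs -> is_adjoint ip Bs B.
Proof. by move=> adj u v; rewrite (ip_conj hH) -adj -(ip_conj hH). Qed.

Lemma adjoint_linear (B Bs : V -> V) : is_adjoint ip B Bs -> is_linear Bs.
Proof.
move=> /adjoint_sym adj c u w; apply: ipl_ext => z.
by rewrite ipDl ipZl !adj ipDl ipZl.
Qed.

End InnerProduct.

Section SelfAdjoint.
Variables (R : realType) (V : lmodType R[i]) (ip : V -> V -> R[i]).
Hypothesis hH : is_hilbert ip.
Variables (P : V -> V) (p : R).
Hypotheses (P_lin : is_linear P) (P_sa : is_adjoint ip P P) (p_ge0 : 0 <= p).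
Hypothesis P_numrad : forall z, hnorm ip z = 1 -> `|complex.Re (ip (P z) z)| <= p.

Lemma selfadjoint_quad_le z : `|complex.Re (ip (P z) z)| <= p * sqnorm ip z.
Proof.
have [z0|zpos] := eqVneq (sqnorm ip z) 0.
  by rewrite z0 mulr0 (sqnorm_eq0 hH z0) (lin0 P_lin) (ip0l hH) normr0.
have zgt0 : 0 < sqnorm ip z by rewrite lt0r zpos sqnorm_ge0.
set s := (hnorm ip z)^-1.
have s2 : s ^+ 2 * sqnorm ip z = 1 by rewrite exprVn sqr_hnorm // mulVf.
have sz1 : hnorm ip (s%:C%C *: z) = 1.
  rewrite hnorm_eq1 // (sqnormZ hH _ (_ : _ = (s ^+ 2)%:C%C)) //.
  by rewrite conjC_real -rmorphM expr2.
have := P_numrad sz1; rewrite (linZ P_lin) (ipZl hH) (ipZr hH) conjC_real.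
rewrite mulrA -rmorphM -expr2 Re_realM normrM ger0_norm ?sqr_ge0 // => h.
by have := ler_wpM2r (sqnorm_ge0 hH z) h; rewrite mulrAC s2 mul1r.
Qed.

(* polarization: [4 Re <Pu, v> = Re <P(u+v), u+v> - Re <P(u-v), u-v>] *)
Lemma selfadjoint_polar_le u v :
  2 * complex.Re (ip (P u) v) <= p * (sqnorm ip u + sqnorm ip v).
Proof.
have := selfadjoint_quad_le (u + v); have := selfadjoint_quad_le (u - v).
rewrite /sqnorm !(linD P_lin, linN P_lin) !(ipDl hH, ipNl hH, ipDr hH, ipNr hH).
rewrite !(raddfD, raddfN) /= (P_sa v u) (Re_ipC hH (P u) v) (Re_ipC hH u v) !opprK.
set a := complex.Re (ip (P u) v); set b := complex.Re (ip (P u) u).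
set c := complex.Re (ip (P v) v); set d := complex.Re (ip u v).
rewrite !ler_norml !mulrDr !mulrN => /andP[h1 _] /andP[_ h2]; lra.
Qed.

Lemma selfadjoint_norm_le z : hnorm ip (P z) <= p * hnorm ip z.
Proof.
suff h : sqnorm ip (P z) <= p ^+ 2 * sqnorm ip z.
  by rewrite -ler_sqr ?nnegrE ?mulr_ge0 ?hnorm_ge0 // exprMn !sqr_hnorm.
have := sqnorm_ge0 hH (P z); have := sqnorm_ge0 hH z.
have [p0|p_neq0] := eqVneq p 0.
  have : 2 * sqnorm ip (P z) <= p * _ := selfadjoint_polar_le z (P z).
  by rewrite p0 expr0n /= !mul0r => *; lra.
have := selfadjoint_polar_le (p%:C%C *: z) (P z).
rewrite (linZ P_lin) (ipZl hH) Re_realM -/(sqnorm ip _).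
rewrite (sqnormZ hH _ (_ : _ = (p ^+ 2)%:C%C)); last by rewrite conjC_real -rmorphM expr2.
set a := sqnorm ip (P z); set b := sqnorm ip z => h b0 a0.
have p_gt0 : 0 < p by rewrite lt0r p_neq0.
rewrite -(ler_pM2l p_gt0); nra.
Qed.

End SelfAdjoint.

Section NumericalRange.
Variables (R : realType) (V : lmodType R[i]) (ip : V -> V -> R[i]).
Variable T : V -> V.
Hypothesis T_bounded :
  exists M, forall z, hnorm ip z = 1 -> `|complex.Re (ip (T z) z)| <= M.

Let S := [set complex.Re (ip (T x) x) | x in unit_sphere ip]%classic.

Definition numrange_mid := (sup S + inf S) / 2.

Lemma numrange_bounds z : hnorm ip z = 1 -> inf S <= complex.Re (ip (T z) z) <= sup S.
Proof.
have [M hM] := T_bounded => z1; apply/andP; split.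
  apply: ge_inf; last by exists z.
  by exists (- M) => _ [x x1 <-]; have := hM x x1; rewrite ler_norml => /andP[].
apply: ub_le_sup; last by exists z.
by exists M => _ [x x1 <-]; have := hM x x1; rewrite ler_norml => /andP[].
Qed.

Lemma width_ge0 : 0 <= width ip T.
Proof.
rewrite /width -/S subr_ge0; have [[z z1]|sphere0] := pselect (exists z, hnorm ip z = 1).
  by have /andP[h1 h2] := numrange_bounds z1; apply: le_trans h2.
suff -> : S = set0 by rewrite inf0 sup0.
by apply/seteqP; split => // r [z z1 _]; apply: sphere0; exists z.
Qed.

Lemma numrange_mid_dist z : hnorm ip z = 1 ->
  `|complex.Re (ip (T z) z) - numrange_mid| <= width ip T / 2.
Proof.
move=> /numrange_bounds /andP[h1 h2]; rewrite /numrange_mid /width -/S.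
by rewrite ler_norml; apply/andP; split; lra.
Qed.

End NumericalRange.

Section Shift.
Variables (R : realType) (V : lmodType R[i]) (ip : V -> V -> R[i]).
Hypothesis hH : is_hilbert ip.

Definition shift (T : V -> V) (a : R) (z : V) := T z - (a%:C)%C *: z.

Lemma shift_linear T a : is_linear T -> is_linear (shift T a).
Proof.
move=> T_lin c u w; rewrite /shift T_lin scalerDr !scalerA mulrC -scalerA.
by rewrite scalerBr addrACA opprD.
Qed.

Lemma shift_selfadjoint T a :
  is_adjoint ip T T -> is_adjoint ip (shift T a) (shift T a).
Proof.
move=> T_sa u v.
by rewrite /shift (ipBl hH) (ipBr hH) (ipZl hH) (ipZr hH) T_sa conjC_real.
Qed.

Lemma Re_ip_shift T a z : hnorm ip z = 1 ->
  complex.Re (ip (shift T a z) z) = complex.Re (ip (T z) z) - a.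
Proof.
rewrite hnorm_eq1 // => z1.
by rewrite /shift (ipBl hH) (ipZl hH) raddfB /= Re_realM -/(sqnorm ip z) z1 mulr1.
Qed.

Variable T : V -> V.
Hypotheses (T_lin : is_linear T) (T_sa : is_adjoint ip T T).
Hypothesis T_bounded :
  exists M, forall z, hnorm ip z = 1 -> `|complex.Re (ip (T z) z)| <= M.

Lemma shift_mid_norm_le z :
  hnorm ip (shift T (numrange_mid ip T) z) <= width ip T / 2 * hnorm ip z.
Proof.
apply: selfadjoint_norm_le => //.
- exact: shift_linear.
- exact: shift_selfadjoint.
- by rewrite divr_ge0 ?width_ge0.
- by move=> x x1; rewrite Re_ip_shift // numrange_mid_dist.
Qed.

End Shift.

Section Commutator.
Variables (R : realType) (V : lmodType R[i]) (ip : V -> V -> R[i]).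
Hypothesis hH : is_hilbert ip.
Variables (P Q : V -> V) (p q : R).
Hypotheses (P_sa : is_adjoint ip P P) (Q_sa : is_adjoint ip Q Q).
Hypotheses (p_ge0 : 0 <= p) (q_ge0 : 0 <= q).
Hypotheses (P_le : forall z, hnorm ip (P z) <= p * hnorm ip z)
           (Q_le : forall z, hnorm ip (Q z) <= q * hnorm ip z).

Lemma commutator_norm_le x :
  hnorm ip (P (Q x) - Q (P x)) <= 2 * p * q * hnorm ip x.
Proof.
apply: (hnorm_le_of_Re_ip hH); first by rewrite !mulr_ge0 ?hnorm_ge0.
move=> y; rewrite (ipBl hH) (P_sa (Q x)) (Q_sa (P x)) raddfB /=.
have h1 := ler_norm (complex.Re (ip (Q x) (P y))).
have h2 := ler_norm (- complex.Re (ip (P x) (Q y))); rewrite normrN in h2.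
have e1 := Re_ip_le hH (Q x) (P y); have e2 := Re_ip_le hH (P x) (Q y).
have f1 : hnorm ip (Q x) * hnorm ip (P y) <= p * q * (hnorm ip x * hnorm ip y).
  rewrite (_ : p * q * _ = q * hnorm ip x * (p * hnorm ip y)); last by ring.
  by apply: ler_pM; rewrite ?hnorm_ge0.
have f2 : hnorm ip (P x) * hnorm ip (Q y) <= p * q * (hnorm ip x * hnorm ip y).
  rewrite (_ : p * q * _ = p * hnorm ip x * (q * hnorm ip y)); last by ring.
  by apply: ler_pM; rewrite ?hnorm_ge0.
rewrite -!mulrA mulrA; lra.
Qed.

End Commutator.

Section Cartesian.
Variables (R : realType) (V : lmodType R[i]) (ip : V -> V -> R[i]).
Hypothesis hH : is_hilbert ip.

Definition re_part (B Bs : V -> V) (x : V) := 2^-1 *: (B x + Bs x).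
Definition im_part (B Bs : V -> V) (x : V) := (2 * 'i)^-1 *: (B x - Bs x).

Variables (B Bs : V -> V).
Hypotheses (B_lin : is_linear B) (Bs_lin : is_linear Bs).

Lemma re_part_linear : is_linear (re_part B Bs).
Proof.
move=> c u w; apply: (ipl_ext hH) => z.
by rewrite /re_part B_lin Bs_lin !(ipDl hH, ipZl hH); ring.
Qed.

Lemma im_part_linear : is_linear (im_part B Bs).
Proof.
move=> c u w; apply: (ipl_ext hH) => z.
by rewrite /im_part B_lin Bs_lin !(ipDl hH, ipNl hH, ipZl hH); ring.
Qed.

Lemma selfcommutator_cartesian (a b : R) x :
  let P := shift (re_part B Bs) a in let Q := shift (im_part B Bs) b in
  Bs (B x) - B (Bs x) = (2 * 'i) *: (P (Q x) - Q (P x)).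
Proof.
move=> P Q; apply: (ipl_ext hH) => z; rewrite /P /Q /shift /re_part /im_part.
rewrite !(linD B_lin, linD Bs_lin, linN B_lin, linN Bs_lin, linZ B_lin, linZ Bs_lin).
rewrite !(ipDl hH, ipNl hH, ipZl hH).
by field; rewrite neq0Ci.
Qed.

Hypothesis B_adj : is_adjoint ip B Bs.

Lemma re_part_selfadjoint : is_adjoint ip (re_part B Bs) (re_part B Bs).
Proof.
move=> u v; rewrite /re_part (ipZl hH) (ipZr hH) (ipDl hH) (ipDr hH).
by rewrite B_adj (adjoint_sym hH B_adj) fmorphV /= conjC_nat addrC.
Qed.

Lemma im_part_selfadjoint : is_adjoint ip (im_part B Bs) (im_part B Bs).
Proof.
move=> u v; rewrite /im_part (ipZl hH) (ipZr hH) (ipBl hH) (ipBr hH).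
rewrite B_adj (adjoint_sym hH B_adj) fmorphV /= rmorphM /= conjC_nat conjCi.
by field; rewrite neq0Ci.
Qed.

Lemma Re_ip_re_part z : complex.Re (ip (re_part B Bs z) z) = complex.Re (ip (B z) z).
Proof.
rewrite /re_part (ipZl hH) (ipDl hH) (adjoint_sym hH B_adj) (ip_conj hH (B z) z).
by case: (ip (B z) z) => a b /=; field.
Qed.

Lemma Re_ip_im_part z : complex.Re (ip (im_part B Bs z) z) = complex.Im (ip (B z) z).
Proof.
rewrite /im_part (ipZl hH) (ipBl hH) (adjoint_sym hH B_adj) (ip_conj hH (B z) z).
by case: (ip (B z) z) => a b /=; field.
Qed.

Hypothesis B_bounded : exists M, forall z, hnorm ip (B z) <= M * hnorm ip z.

Lemma re_part_numrange_bounded :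
  exists M, forall z, hnorm ip z = 1 -> `|complex.Re (ip (re_part B Bs z) z)| <= M.
Proof.
have [M B_le] := B_bounded; exists M => z z1.
rewrite Re_ip_re_part; apply: le_trans (Re_ip_le hH _ _) _.
by rewrite z1 mulr1 -[M]mulr1 -z1.
Qed.

Lemma im_part_numrange_bounded :
  exists M, forall z, hnorm ip z = 1 -> `|complex.Re (ip (im_part B Bs z) z)| <= M.
Proof.
have [M B_le] := B_bounded; exists M => z z1.
rewrite Re_ip_im_part; apply: le_trans (Im_ip_le hH _ _) _.
by rewrite z1 mulr1 -[M]mulr1 -z1.
Qed.

End Cartesian.

Section Rotation.
Variables (R : realType) (V : lmodType R[i]) (ip : V -> V -> R[i]).
Hypothesis hH : is_hilbert ip.
Variables (A As : V -> V) (t : R).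

Lemma At_linear : is_linear A -> is_linear (At A t).
Proof. by move=> A_lin c u w; rewrite /At A_lin scalerDr !scalerA mulrC. Qed.

Lemma Ats_linear : is_linear As -> is_linear (Ats As t).
Proof. by move=> As_lin c u w; rewrite /Ats As_lin scalerDr !scalerA mulrC. Qed.

Lemma At_adjoint : is_adjoint ip A As -> is_adjoint ip (At A t) (Ats As t).
Proof. by move=> adj u v; rewrite /At /Ats (ipZl hH) (ipZr hH) conjCK adj. Qed.

Lemma hnorm_At z : hnorm ip (At A t z) = hnorm ip (A z).
Proof. by rewrite /At (hnormZ hH (k := 1)) ?mul1r ?expr1n ?eit_unit. Qed.

Lemma selfcommutator_At : is_linear A -> is_linear As -> forall x,
  As (A x) - A (As x) = Ats As t (At A t x) - At A t (Ats As t x).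
Proof.
move=> A_lin As_lin x; rewrite /At /Ats (linZ A_lin) (linZ As_lin) !scalerA.
by rewrite mulrC eit_unit !scale1r.
Qed.

End Rotation.

Theorem proposition3 (R : realType) (V : lmodType R[i]) (ip : V -> V -> R[i])
  (hH : is_hilbert ip) (A As : V -> V)
  (hA : is_bounded_linear ip A) (hAs : is_adjoint ip A As) :
  forall t : R, 0 <= t < 2%:R * pi ->
    opnorm ip (fun x => As (A x) - A (As x)) <= b_x ip A As t * b_y ip A As t.
Proof.
move=> t _; have [A_lin [M A_le]] := hA.
have As_lin := adjoint_linear hH hAs.
have B_lin := At_linear t A_lin; have Bs_lin := Ats_linear t As_lin.
have B_adj := At_adjoint hH t hAs.
have B_bounded : exists M, forall z, hnorm ip (At A t z) <= M * hnorm ip z.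
  by exists M => z; rewrite hnorm_At.
have H_bounded := re_part_numrange_bounded hH B_adj B_bounded.
have J_bounded := im_part_numrange_bounded hH B_adj B_bounded.
have P_le := shift_mid_norm_le hH (re_part_linear hH B_lin Bs_lin)
  (re_part_selfadjoint hH B_adj) H_bounded.
have Q_le := shift_mid_norm_le hH (im_part_linear hH B_lin Bs_lin)
  (im_part_selfadjoint hH B_adj) J_bounded.
have bx_ge0 := width_ge0 H_bounded; have by_ge0 := width_ge0 J_bounded.
have p_ge0 : 0 <= b_x ip A As t / 2 by rewrite divr_ge0.
have q_ge0 : 0 <= b_y ip A As t / 2 by rewrite divr_ge0.
apply: opnorm_le => [|x]; first exact: mulr_ge0.
rewrite (selfcommutator_At t A_lin As_lin).
rewrite (selfcommutator_cartesian hH B_lin Bs_lin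
  (numrange_mid ip (Ht A As t)) (numrange_mid ip (Jt A As t))) (hnorm_Z2i hH).
have := commutator_norm_le hH (shift_selfadjoint hH _ (re_part_selfadjoint hH B_adj))
  (shift_selfadjoint hH _ (im_part_selfadjoint hH B_adj)) p_ge0 q_ge0 P_le Q_le x.
move=> /(ler_wpM2l (ler0n _ 2)) /le_trans; apply.
by rewrite le_eqVlt; apply/orP; left; apply/eqP; field.
Qed.
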